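(* Let $L\in K[D]$ with $\operatorname{Sym}_L=S_1S_2$, where $S_1,S_2$ are coprime homogeneous polynomials. Then for every $t$ with $0\le t<\operatorname{ord}(L)$ there is at most one, up to lower order terms, partial factorization of $L$ of order $t$ and type $(S_1)(S_2)$. That is: if $F_1\circ F_2$ and $F_1'\circ F_2'$ are two such partial factorizations, then $\operatorname{ord}(F_i-F_i')<t-(d-d_i)$ for $i=1,2$, where $d=\operatorname{ord}L$ and $d_i=\deg S_i$.
   Context: $K$ is a field with commuting derivations $\partial_1,\dots,\partial_n$, and $K[D]=K[D_1,\dots,D_n]$ is the ring of linear differential operators over $K$: the $D_i$ commute with each other and $D_i\circ a=aD_i+\partial_i(a)$ for $a\in K$. Every $L\in K[D]$ is uniquely $\sum_{|J|\le d}a_JD^J$ with $a_J\in K$ and $D^J=D_1^{j_1}\cdots D_n^{j_n}$. The order $\operatorname{ord}(L)$ is the largest $|J|=j_1+\dots+j_n$ with $a_J\ne0$, and $\operatorname{ord}(0)=-\infty$. The symbol $\operatorname{Sym}_L=\sum_{|J|=\operatorname{ord}L}a_JX^J\in K[X_1,\dots,X_n]$. For $t\in\{0,\dots,\operatorname{ord}L\}$, a partial factorization of $L$ of order $t$ and type $(S_1)(S_2)$ is a composition $F_1\circ F_2$ with $\operatorname{Sym}_{F_i}=S_i$ and $\operatorname{ord}(L-F_1\circ F_2)<t$. *)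

From HB Require Import structures.
From mathcomp Require Import all_boot all_order all_algebra.
From mathcomp Require Import mpoly.
Set Implicit Arguments. Unset Strict Implicit. Unset Printing Implicit Defensive.
Import Order.TTheory GRing.Theory Num.Theory.
Local Open Scope ring_scope.

Definition commuting_derivations (K : fieldType) (n : nat) (der : 'I_n -> K -> K) :=
  [/\ forall i a b, der i (a + b) = der i a + der i b,
      forall i a b, der i (a * b) = a * der i b + der i a * b
    & forall i j a, der i (der j a) = der j (der i a)].

(* Operators L = sum_J a_J D^J in K[D] are represented by their coefficient
   families: an element of {mpoly K[n]} whose coefficient of 'X_[J] is a_J.
   The (commutative) ring structure of {mpoly K[n]} is used only for the
   K-module structure and for symbols; composition is defined below. *)
Section DiffOp.
Variables (K : fieldType) (n : nat) (der : 'I_n -> K -> K).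

(* D_i o M, for M = sum_J b_J D^J :  sum_J (b_J D^J D_i + der_i(b_J) D^J) *)
Definition Di_comp (i : 'I_n) (M : {mpoly K[n]}) : {mpoly K[n]} :=
  'X_i * M + \sum_(m <- msupp M) der i M@_m *: 'X_[m].

Definition DJ_comp (J : 'X_{1..n}) (M : {mpoly K[n]}) : {mpoly K[n]} :=
  foldr (fun i N => iter (J i) (Di_comp i) N) M (enum 'I_n).

Definition dcomp (L M : {mpoly K[n]}) : {mpoly K[n]} :=
  \sum_(m <- msupp L) L@_m *: DJ_comp m M.

End DiffOp.

(* order: None stands for -oo (order of 0) *)
Definition dord (K : fieldType) (n : nat) (L : {mpoly K[n]}) : option nat :=
  if L == 0 then None else Some (msize L).-1.

Definition ord_lt (K : fieldType) (n : nat) (L : {mpoly K[n]}) (r : int) : bool :=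
  if dord L is Some k then (k%:Z < r)%R else true.

Definition Sym (K : fieldType) (n : nat) (L : {mpoly K[n]}) : {mpoly K[n]} :=
  \sum_(m <- msupp L | mdeg m == (msize L).-1) L@_m *: 'X_[m].

Definition pdeg (K : fieldType) (n : nat) (S : {mpoly K[n]}) : nat := (msize S).-1.

(* coprime in K[X_1..X_n]: every common divisor is a constant *)
Definition mcoprime (K : fieldType) (n : nat) (S1 S2 : {mpoly K[n]}) : Prop :=
  forall q : {mpoly K[n]},
    (exists r, S1 = q * r) -> (exists r, S2 = q * r) -> (msize q <= 1)%N.

Definition partial_factorization (K : fieldType) (n : nat) (der : 'I_n -> K -> K)
    (L : {mpoly K[n]}) (t : nat) (S1 S2 F1 F2 : {mpoly K[n]}) : Prop :=
  [/\ Sym F1 = S1, Sym F2 = S2 & ord_lt (L - dcomp der F1 F2) t%:Z].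

From HB Require Import structures.
From mathcomp Require Import all_boot all_order all_algebra.
From mathcomp Require Import mpoly.
From mathcomp Require Import ring zify.
From mathcomp Require ssrcomplements.
From Stdlib Require Import Classical ClassicalEpsilon.
Set Implicit Arguments. Unset Strict Implicit. Unset Printing Implicit Defensive.
Import Order.TTheory GRing.Theory Num.Theory.
Local Open Scope ring_scope.

(* Write G1 = F1 - F1' and G2 = F2 - F2'. Both compositions agree with L up to
   order t, so F1 o G2 + G1 o F2' has order < t. Composition and product of
   operators agree in top degree, so as long as the top homogeneous parts of
   F1 G2 and G1 F2' do not cancel, both products have order < t, which is the
   claimed bound. A cancellation would give S1 Sym(G2) = - Sym(G1) S2, hence
   S1 | Sym(G1) by coprimality, which is impossible since ord G1 < deg S1.
   The divisibility step needs unique factorization in K[X_1..X_n], proved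
   from Gauss's lemma by induction on the number of variables. *)

Lemma classic_ex_minn (P : nat -> Prop) : (exists n, P n) ->
  exists n, P n /\ forall m, (m < n)%N -> ~ P m.
Proof.
move=> [n Pn]; elim: n {-2}n (leqnn n) Pn => [|k IH] n.
  by rewrite leqn0 => /eqP -> P0; exists 0%N.
have [[m [ltmn Pm]] lenk _|noP _ Pn] := classic (exists m, (m < n)%N /\ P m).
  by apply: (IH m) => //; rewrite -ltnS (leq_trans ltmn).
by exists n; split => // m ltmn Pm; apply: noP; exists m.
Qed.

Section Divisibility.
Variable R : comUnitRingType.
Implicit Types a b c u : R.

Definition dvdr a b := exists c, b = a * c.

Definition coprimer a b := forall q, dvdr q a -> dvdr q b -> q \is a GRing.unit.

Lemma dvdr_refl a : dvdr a a. Proof. by exists 1; rewrite mulr1. Qed.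

Lemma dvdr_trans a b c : dvdr a b -> dvdr b c -> dvdr a c.
Proof. by move=> [x ->] [y ->]; exists (x * y); rewrite mulrA. Qed.

Lemma dvdr_mulr a b c : dvdr a b -> dvdr a (b * c).
Proof. by move=> [x ->]; exists (x * c); rewrite mulrA. Qed.

Lemma dvdr_mull a b c : dvdr a b -> dvdr a (c * b).
Proof. by rewrite mulrC; apply: dvdr_mulr. Qed.

Lemma dvdr_mul2l a b c : dvdr a b -> dvdr (c * a) (c * b).
Proof. by move=> [x ->]; exists x; rewrite mulrA. Qed.

Lemma unit_dvdr u a : u \is a GRing.unit -> dvdr u a.
Proof. by move=> Uu; exists (u^-1 * a); rewrite mulrA mulrV // mul1r. Qed.

Lemma dvdr0 a : dvdr a 0. Proof. by exists 0; rewrite mulr0. Qed.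

Lemma dvdrD a b c : dvdr a b -> dvdr a c -> dvdr a (b + c).
Proof. by move=> [x ->] [y ->]; exists (x + y); rewrite mulrDr. Qed.

Lemma dvdrB a b c : dvdr a b -> dvdr a c -> dvdr a (b - c).
Proof. by move=> ab [y ->]; apply: dvdrD ab _; exists (- y); rewrite mulrN. Qed.

Lemma dvdr_sum a (I : Type) (r : seq I) (P : pred I) (F : I -> R) :
  (forall i, P i -> dvdr a (F i)) -> dvdr a (\sum_(i <- r | P i) F i).
Proof. by move=> aF; apply: big_ind => //; [exact: dvdr0 | exact: dvdrD]. Qed.

Lemma dvdr_unit a u : dvdr a u -> u \is a GRing.unit -> a \is a GRing.unit.
Proof.
by move=> [x ->] /unitrP [y [_ xy]]; apply/unitrPr; exists (x * y); rewrite mulrA.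
Qed.

Lemma dvdr_neq0 a b : dvdr a b -> b != 0 -> a != 0.
Proof. by move=> [x ->]; apply: contraNneq => ->; rewrite mul0r. Qed.

End Divisibility.

Section PrimeDivisors.
Variable R : idomainType.

Definition primer (p : R) := [/\ p != 0, p \isn't a GRing.unit &
  forall a b, dvdr p (a * b) -> dvdr p a \/ dvdr p b].

Definition has_prime_divisors := forall a : R, a != 0 -> a \isn't a GRing.unit ->
  exists2 p, primer p & dvdr p a.

Definition multiplicative_size (nu : R -> nat) :=
  (forall a b, a != 0 -> b != 0 -> nu (a * b) = (nu a + nu b)%N) /\
  (forall a, a != 0 -> nu a = 0%N -> a \is a GRing.unit).

Variable nu : R -> nat.
Hypothesis nuP : multiplicative_size nu.

Lemma size0_unit a : a != 0 -> nu a = 0%N -> a \is a GRing.unit.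
Proof. by case: nuP => _; apply. Qed.

Lemma size_mul_nonunit p a : p != 0 -> a != 0 -> p \isn't a GRing.unit ->
  (nu a < nu (p * a))%N.
Proof.
case: nuP => nuM _ p0 a0 Np; rewrite nuM // -addn1 addnC leq_add2r lt0n.
by apply: contra Np => /eqP; apply: size0_unit.
Qed.

Lemma Gauss_dvdr : has_prime_divisors -> forall f g a : R,
  f != 0 -> coprimer f g -> dvdr f (a * g) -> dvdr f a.
Proof.
move=> pd f; elim: {f}(nu f) {-2}f (leqnn (nu f)) => [|k IH] f lefk g a f0 fg fag.
  by apply/unit_dvdr/size0_unit => //; apply/eqP; rewrite -leqn0.
have [Uf|Nf] := boolP (f \is a GRing.unit); first exact: unit_dvdr.
have [p [p0 Np pp] [f' ef]] := pd f f0 Nf.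
have f'0 : f' != 0 by apply: contraNneq f0 => f'0; rewrite ef f'0 mulr0.
have pag : dvdr p (a * g) by rewrite ef in fag; apply: dvdr_trans fag; apply/dvdr_mulr/dvdr_refl.
have [[a' ea]|pg] := pp a g pag; last first.
  by case/negP: Np; apply: fg => //; rewrite ef; apply/dvdr_mulr/dvdr_refl.
have f'ag : dvdr f' (a' * g).
  case: fag => b e; exists b; apply: (mulfI p0).
  by rewrite mulrA -ea e ef mulrA.
rewrite ef ea; apply/dvdr_mul2l/(IH f' _ g) => //; last first.
  by move=> q qf' qg; apply: fg => //; rewrite ef; apply: dvdr_mull.
by rewrite -ltnS (leq_trans _ lefk) // ef size_mul_nonunit.
Qed.

End PrimeDivisors.

Section PolyPrimeDivisors.
Variable R : idomainType.
Variable nu : R -> nat.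
Hypothesis nuP : multiplicative_size nu.
Hypothesis pdR : has_prime_divisors R.
Implicit Types p q a b : {poly R}.

Lemma unitr_polyC (c : R) : (c%:P \is a GRing.unit) = (c \is a GRing.unit).
Proof.
rewrite poly_unitE size_polyC coefC /=.
by have [->|c0] := eqVneq c 0; rewrite ?unitr0.
Qed.

Lemma dvdr_polyCP (c : R) p : dvdr c%:P p <-> forall i, dvdr c p`_i.
Proof.
split=> [[q ->] i|cp]; first by exists q`_i; rewrite coefCM.
pose f i := proj1_sig (constructive_indefinite_description _ (cp i)).
have ef i : p`_i = c * f i.
  by rewrite /f; case: (constructive_indefinite_description _ _).
exists (\poly_(i < size p) f i); apply/polyP => i.
rewrite coefCM coef_poly; case: ltnP => // hi.
by rewrite mulr0 nth_default.
Qed.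

(* Gauss: look at the coefficient of the product in degree i0 + j0, for the
   first coefficients of a and b not divisible by p. *)
Lemma primer_polyC (c : R) : primer c -> primer c%:P.
Proof.
case=> c0 Nc cp; split; rewrite ?polyC_eq0 ?unitr_polyC //.
move=> a b cab; apply: NNPP => /not_or_and [na nb].
have /not_all_ex_not [i ai] : ~ (forall i, dvdr c a`_i) by move/dvdr_polyCP.
have /not_all_ex_not [j bj] : ~ (forall i, dvdr c b`_i) by move/dvdr_polyCP.
have [i0 [ai0 min_i0]] := classic_ex_minn (ex_intro (fun i => ~ dvdr c a`_i) i ai).
have [j0 [bj0 min_j0]] := classic_ex_minn (ex_intro (fun i => ~ dvdr c b`_i) j bj).
have lt_i0 : (i0 < (i0 + j0).+1)%N by rewrite ltnS leq_addr.
move/dvdr_polyCP/(_ (i0 + j0)%N): cab.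
rewrite coefM (bigD1 (Ordinal lt_i0)) //= addKn.
set S := \sum_(_ < _ | _) _ => cabS.
have cS : dvdr c S.
  apply: dvdr_sum => k /= nk.
  have [lt_k_i0|le_i0_k] := ltnP k i0.
    by apply: dvdr_mulr; apply: NNPP; apply: min_i0.
  have lt_i0_k : (i0 < k)%N.
    rewrite ltn_neqAle le_i0_k andbT eq_sym.
    by apply: contra nk => /eqP k_i0; apply/eqP/val_inj.
  apply: dvdr_mull; apply: NNPP; apply: min_j0.
  by have := ltn_ord k; rewrite ltnS => hk; rewrite ltn_subLR // ltn_add2r.
have : dvdr c (a`_i0 * b`_j0) by rewrite -[_ * _](addrK S); apply: dvdrB.
by case/cp.
Qed.

Definition primitive q := forall c, dvdr c%:P q -> c \is a GRing.unit.

Lemma primitive_decomposition p : p != 0 ->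
  exists c q, [/\ c != 0, p = c%:P * q & primitive q].
Proof.
elim: {p}(nu (lead_coef p)) {-2}p (leqnn (nu (lead_coef p))) => [|k IH] p lep p0.
  exists 1, p; split; rewrite ?oner_eq0 ?mul1r // => c [q ep].
  apply: (@dvdr_unit _ _ (lead_coef p)).
    by exists (lead_coef q); rewrite ep lead_coefM lead_coefC.
  by apply: (size0_unit nuP); [rewrite lead_coef_eq0 | apply/eqP; rewrite -leqn0].
have [Pp|] := classic (primitive p).
  by exists 1, p; split; rewrite ?oner_eq0 ?mul1r.
move=> /(not_all_ex_not _ _) [c cNU]; have [cp Nc] := imply_to_and _ _ cNU.
have c0 : c != 0 by rewrite -polyC_eq0; apply: dvdr_neq0 cp p0.
have [r [r0 Nr _] [c' ec]] := pdR c0 (introN idP Nc).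
have [p' ep] : dvdr r%:P p.
  by apply: dvdr_trans cp; exists c'%:P; rewrite ec polyCM.
have p'0 : p' != 0 by apply: contraNneq p0 => p'0; rewrite ep p'0 mulr0.
have [|c1 [q [c10 ep' Pq]]] := IH p' _ p'0.
  move: lep; rewrite ep lead_coefM lead_coefC => lep.
  by rewrite -ltnS (leq_trans _ lep) // size_mul_nonunit // lead_coef_eq0.
exists (r * c1), q; split => //; first by rewrite mulf_neq0.
by rewrite ep ep' polyCM mulrA.
Qed.

Lemma primitive_dvdr_polyCM q c a : primitive q -> c != 0 ->
  dvdr q (c%:P * a) -> dvdr q a.
Proof.
move=> Pq; elim: {c}(nu c) {-2}c (leqnn (nu c)) a => [|k IH] c lec a c0 qca.
  have Uc : c \is a GRing.unit by apply: (size0_unit nuP) => //; apply/eqP; rewrite -leqn0.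
  apply: dvdr_trans qca _; exists c^-1%:P.
  by rewrite mulrC mulrA -polyCM mulVr // mul1r.
have [Uc|Nc] := boolP (c \is a GRing.unit).
  apply: dvdr_trans qca _; exists c^-1%:P.
  by rewrite mulrC mulrA -polyCM mulVr // mul1r.
have [r pr [c' ec]] := pdR c0 Nc.
have [r0 Nr _] := pr; have [_ _ rP] := primer_polyC pr.
have c'0 : c' != 0 by apply: contraNneq c0 => c'0; rewrite ec c'0 mulr0.
case: qca => s es.
have : dvdr r%:P (q * s) by rewrite -es ec polyCM -mulrA; apply: dvdr_mulr; apply: dvdr_refl.
case/rP => [rq|[s' es']]; first by case/negP: Nr; apply: Pq.
apply: (IH c') => //.
  by rewrite -ltnS (leq_trans _ lec) // ec size_mul_nonunit.
exists s'; apply: (mulfI (_ : r%:P != 0)); first by rewrite polyC_eq0.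
by rewrite mulrA -polyCM -ec es es' mulrCA.
Qed.

(* The pseudo-remainder of x by h is again a combination of q and a, of
   smaller size, hence zero by minimality of h. *)
Lemma min_comb_dvdr q a h : h != 0 -> (exists u v, h = u * q + v * a) ->
  (forall u v, u * q + v * a != 0 -> (size h <= size (u * q + v * a)%R)%N) ->
  forall x, (exists u v, x = u * q + v * a) ->
  exists k, dvdr h ((lead_coef h ^+ k)%:P * x).
Proof.
move=> h0 [u [v eh]] hmin x [u' [v' ex]]; exists (scalp x h).
set lc := (lead_coef h ^+ scalp x h)%:P.
have exh := Pdiv.Idomain.divp_eq x h.
have emod : x %% h = (lc * u' - x %/ h * u) * q + (lc * v' - x %/ h * v) * a.
  have -> : x %% h = lead_coef h ^+ scalp x h *: x - x %/ h * h.
    by rewrite exh addrC addKr.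
  by rewrite -mul_polyC -/lc {1}ex {2}eh; ring.
have xh0 : x %% h = 0.
  apply: NNPP => /eqP xh0; move: (hmin (lc * u' - x %/ h * u) (lc * v' - x %/ h * v)).
  by rewrite -emod xh0 leqNgt ltn_modp h0 => /(_ isT).
by exists (x %/ h); rewrite /lc mul_polyC exh xh0 addr0 mulrC.
Qed.

(* The primitive part of a combination u q + v a of minimal size divides both
   q and a, so it is either a unit multiple of q or a constant. *)
Lemma primitive_minimal_primer q : primitive q -> (1 < size q)%N ->
  (forall r, dvdr r q -> (1 < size r)%N -> (size q <= size r)%N) -> primer q.
Proof.
move=> Pq sq qmin; have q0 : q != 0 by rewrite -size_poly_gt0 (ltn_trans _ sq).
split=> //.
  by rewrite poly_unitE negb_and neq_ltn sq orbT.
move=> a b qab; apply: NNPP => /not_or_and [qa qb].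
have a0 : a != 0 by apply/eqP => a0; apply: qa; rewrite a0; apply: dvdr0.
have Ta : exists m, exists u v, u * q + v * a != 0 /\ size (u * q + v * a) = m.
  by exists (size a), 0, 1; rewrite mul0r mul1r add0r.
have [m [[u [v [h0 hs]]] hmin]] := classic_ex_minn Ta.
set h := u * q + v * a in h0 hs.
have [c [h1 [c0 eh Ph1]]] := primitive_decomposition h0.
have h1_comb x : (exists u' v', x = u' * q + v' * a) -> dvdr h1 x.
  move=> /(min_comb_dvdr h0 (ex_intro _ u (ex_intro _ v erefl))) hx.
  have [|k hk] := hx => [u' v' nz|].
    by rewrite hs leqNgt; apply/negP => lt; apply: (hmin _ lt); exists u', v'.
  apply: (primitive_dvdr_polyCM Ph1 (_ : lead_coef h ^+ k != 0)).
    by rewrite expf_neq0 // lead_coef_eq0.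
  by apply: dvdr_trans hk; rewrite eh; exists c%:P; rewrite mulrC.
have h1q : dvdr h1 q by apply: h1_comb; exists 1, 0; rewrite mul1r mul0r addr0.
have h1a : dvdr h1 a by apply: h1_comb; exists 0, 1; rewrite mul1r mul0r add0r.
have [sh1|/size1_polyC eh1] := ltnP 1 (size h1).
  have := qmin _ h1q sh1; case: h1q => w ew.
  have w0 : w != 0 by apply: contraNneq q0 => w0; rewrite ew w0 mulr0.
  have h10 : h1 != 0 by apply: contraNneq q0 => h10; rewrite ew h10 mul0r.
  rewrite {1}ew size_mul // => sw.
  have /size1_polyC ew' : (size w <= 1)%N by move: sw; rewrite -subn1; lia.
  move: ew'; set wc := w`_0 => ew'.
  have Uw : wc \is a GRing.unit.
    by apply: Pq; rewrite ew ew'; apply: dvdr_mull; apply: dvdr_refl.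
  apply: qa; apply: dvdr_trans h1a; exists wc^-1%:P.
  by rewrite ew ew' -mulrA -polyCM mulrV // mulr1.
have U : h1`_0 \is a GRing.unit by apply: Ph1; rewrite {2}eh1; exact: dvdr_refl.
have ch10 : c * h1`_0 != 0.
  by rewrite mulf_neq0 //; apply: contraTneq U => ->; rewrite unitr0.
apply: qb; apply: (primitive_dvdr_polyCM Pq ch10).
have -> : (c * h1`_0)%:P * b = u * b * q + v * (a * b).
  by rewrite polyCM -eh1 -eh /h; ring.
by apply: dvdrD; [apply: dvdr_mull; apply: dvdr_refl | apply: dvdr_mull].
Qed.

Lemma has_prime_divisors_poly : has_prime_divisors {poly R}.
Proof.
move=> p p0 Np.
have [[c [cp Nc]]|noC] := classic (exists c, dvdr c%:P p /\ c \isn't a GRing.unit).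
  have c0 : c != 0 by rewrite -polyC_eq0; apply: dvdr_neq0 cp p0.
  have [r rpr [x ex]] := pdR c0 Nc.
  exists r%:P; first exact: primer_polyC.
  by apply: dvdr_trans cp; exists x%:P; rewrite ex polyCM.
have Pp : primitive p.
  by move=> c cp; apply: NNPP => Nc; apply: noC; exists c; split => //; exact/negP.
have sp : (1 < size p)%N.
  rewrite ltnNge; apply/negP => /size1_polyC ep.
  have Up : p`_0 \is a GRing.unit by apply: Pp; rewrite {2}ep; exact: dvdr_refl.
  by case/negP: Np; rewrite ep unitr_polyC.
have [k [[q [qp sq ek]] kmin]] := classic_ex_minn (ex_intro (fun k => exists q,
  [/\ dvdr q p, (1 < size q)%N & size q = k]) _ (ex_intro _ p (And3 (dvdr_refl p) sp erefl))).
exists q => //; apply: primitive_minimal_primer => //.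
  by move=> c cq; apply: Pp; apply: dvdr_trans qp.
move=> r rq sr; rewrite leqNgt; apply/negP => lt.
by apply: (kmin (size r)); [rewrite -ek | exists r; split => //; apply: dvdr_trans qp].
Qed.

End PolyPrimeDivisors.

Lemma has_prime_divisors_rmorph (A B : idomainType) (f : {rmorphism A -> B}) :
  injective f -> (forall b, exists a, f a = b) ->
  has_prime_divisors B -> has_prime_divisors A.
Proof.
move=> f_inj f_surj pdB.
have dvdr_f x y : dvdr (f x) (f y) -> dvdr x y.
  by move=> [z ez]; have [w ew] := f_surj z; exists w; apply: f_inj; rewrite rmorphM ew.
have unit_f x : (f x \is a GRing.unit) = (x \is a GRing.unit).
  apply/idP/idP => [/unitrPr [z ez]|]; last exact: rmorph_unit.
  have [w ew] := f_surj z.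
  by apply/unitrPr; exists w; apply: f_inj; rewrite rmorphM ew rmorph1.
move=> a a0 Na.
have fa0 : f a != 0 by rewrite (raddf_eq0 _ f_inj).
have [pi [pi0 Npi pi_prime] pia] := pdB _ fa0 (negbT (etrans (unit_f a) (negbTE Na))).
have [r er] := f_surj pi.
exists r; last by apply: dvdr_f; rewrite er.
split; first by apply: contraNneq pi0 => r0; rewrite -er r0 rmorph0.
  by rewrite -unit_f er.
move=> x y rxy; have : dvdr pi (f x * f y).
  by rewrite -er -rmorphM; case: rxy => z ->; exists (f z); rewrite rmorphM.
by case/pi_prime => h; [left|right]; apply: dvdr_f; rewrite er.
Qed.

Section MpolyCoeff.
Variables (R : nzRingType) (n : nat).

Lemma sum_msupp_mcoeff (F : 'X_{1..n} -> R -> R) (p : {mpoly R[n]}) m :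
  F m 0 = 0 -> \sum_(m' <- msupp p) F m' p@_m' * (m' == m)%:R = F m p@_m.
Proof.
move=> F0; have [mp|mNp] := boolP (m \in msupp p).
  rewrite (bigD1_seq m) //= ?msupp_uniq // eqxx mulr1 big1 ?addr0 //.
  by move=> m' /negbTE ->; rewrite mulr0.
rewrite memN_msupp_eq0 // F0 big1_seq // => m' /andP [_ m'p].
by rewrite (_ : m' == m = false) ?mulr0 //; apply: contraNF mNp => /eqP <-.
Qed.

Lemma mcoeff_sum_msupp (F : 'X_{1..n} -> R -> R) (p : {mpoly R[n]}) m :
  F m 0 = 0 -> (\sum_(m' <- msupp p) F m' p@_m' *: 'X_[m'])@_m = F m p@_m.
Proof.
move=> F0; rewrite (raddf_sum (mcoeff m)) -(sum_msupp_mcoeff p F0).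
by apply: eq_bigr => m' _; rewrite /= mcoeffZ mcoeffX.
Qed.

End MpolyCoeff.

Local Notation widen := (widen_ord (leqnSn _)).

Section MuniBijective.
Variables (R : nzRingType) (n : nat).

(* [muni] turns the last of the n.+1 variables into the variable of the
   univariate polynomial. *)
Definition mnm_belast (m : 'X_{1..n.+1}) : 'X_{1..n} := [multinom m (widen i) | i < n].
Definition mnm_rcons (m : 'X_{1..n}) (k : nat) : 'X_{1..n.+1} := [multinom of rcons m k].

Lemma mnm_rcons_max m k : (mnm_rcons m k) ord_max = k.
Proof. by rewrite multinomE (tnth_nth 0%N) nth_rcons /= size_tuple ltnn eqxx. Qed.

Lemma mnm_rcons_widen m k (i : 'I_n) : (mnm_rcons m k) (widen i) = m i.
Proof.
case: m => m; rewrite !(mnm_nth 0%N) nth_rcons size_tuple /=.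
by case: i => i /= ->.
Qed.

Lemma mnm_belast_rcons m k : mnm_belast (mnm_rcons m k) = m.
Proof. by apply/mnmP => i; rewrite mnmE mnm_rcons_widen. Qed.

Lemma mnm_rcons_belast m : mnm_rcons (mnm_belast m) (m ord_max) = m.
Proof.
apply/mnmP => i; case: (unliftP ord_max i) => [j ->|->]; last by rewrite mnm_rcons_max.
have -> : lift ord_max j = widen j.
  by apply/val_inj; rewrite /= /bump leqNgt ltn_ord.
by rewrite mnm_rcons_widen mnmE.
Qed.

Lemma eq_mnm_rcons m k m' :
  (m' == mnm_rcons m k) = (mnm_belast m' == m) && (m' ord_max == k).
Proof.
apply/eqP/andP => [->|[/eqP <- /eqP <-]]; last by rewrite mnm_rcons_belast.
by rewrite mnm_belast_rcons mnm_rcons_max.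
Qed.

Lemma mcoeff_muni (p : {mpoly R[n.+1]}) k m : ((muni p)`_k)@_m = p@_(mnm_rcons m k).
Proof.
rewrite muniE coef_sum (raddf_sum (mcoeff m)) [p in RHS]mpolyE (raddf_sum (mcoeff _)).
apply: eq_bigr => m' _; rewrite coefZ coefXn [k == _]eq_sym /= mcoeffZ mcoeffX.
rewrite eq_mnm_rcons andbC; case: (m' ord_max == k); last by rewrite !mulr0 mcoeff0.
by rewrite mulr1 mcoeffZ mcoeffX.
Qed.

Lemma muni_inj : injective (@muni n R).
Proof.
by move=> p q e; apply/mpolyP => m; rewrite -(mnm_rcons_belast m) -!mcoeff_muni e.
Qed.

Lemma muni_surj (P : {poly {mpoly R[n]}}) : exists p, muni p = P.
Proof.
exists (\sum_(i < size P) \sum_(m' <- msupp P`_i) P`_i@_m' *: 'X_[mnm_rcons m' i]).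
apply/polyP => k; apply/mpolyP => m; rewrite mcoeff_muni.
rewrite [in RHS](_ : P = \sum_(i < size P) P`_i *: 'X^i); last by rewrite -poly_def coefK.
rewrite coef_sumMXn !(raddf_sum (mcoeff _)) [in RHS]big_mkcond /=.
apply: eq_bigr => i _; rewrite (raddf_sum (mcoeff _)).
under eq_bigr => m' _ do rewrite /= mcoeffZ mcoeffX eq_mnm_rcons mnm_belast_rcons mnm_rcons_max.
case: (i == k :> nat); last by rewrite big1 // => m' _; rewrite andbF mulr0.
by under eq_bigr do rewrite andbT; exact: (@sum_msupp_mcoeff _ _ (fun _ x => x) _ _ erefl).
Qed.

End MuniBijective.

Section MpolyGauss.
Variable K : fieldType.

Lemma msize1_unit n (p : {mpoly K[n]}) : msize p = 1%N -> p \is a GRing.unit.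
Proof.
move/eqP/msize_poly1P => [c c0 ->].
by apply/unitrPr; exists c^-1%:MP; rewrite -mpolyCM mulfV.
Qed.

Lemma msize_multiplicative n :
  multiplicative_size (fun p : {mpoly K[n]} => (msize p).-1).
Proof.
split=> [a b a0 b0|a a0 a1]; last by apply: msize1_unit; rewrite (mpolySpred _ a0) a1.
rewrite /= msizeM // [msize a](mpolySpred _ a0) [msize b](mpolySpred _ b0).
by rewrite addSn addnS.
Qed.

(* By induction on n, through K[X_1..X_n.+1] = K[X_1..X_n][X] and Gauss. *)
Lemma has_prime_divisors_mpoly n : has_prime_divisors {mpoly K[n]}.
Proof.
elim: n => [|n IH].
  move=> a a0 /negP[]; apply: msize1_unit.
  have c0 : a@_0%MM != 0 by apply: contraNneq a0 => c0; rewrite (nvar0_mpolyC a) c0.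
  by rewrite (nvar0_mpolyC a) msizeC c0.
apply: (has_prime_divisors_rmorph (f := @muni n K)).
- exact: muni_inj.
- exact: muni_surj.
exact: (has_prime_divisors_poly (msize_multiplicative n) IH).
Qed.

Lemma mcoprime_coprimer n (S1 S2 : {mpoly K[n]}) : S1 != 0 ->
  mcoprime S1 S2 -> coprimer S1 S2.
Proof.
move=> S10 cop q qS1 qS2; apply: msize1_unit; apply/eqP.
by rewrite eqn_leq cop // lt0n msize_poly_eq0 (dvdr_neq0 qS1).
Qed.

Lemma mpoly_Gauss_dvdr n (f g a : {mpoly K[n]}) : f != 0 -> mcoprime f g ->
  dvdr f (a * g) -> dvdr f a.
Proof.
move=> f0 /(mcoprime_coprimer f0) fg.
exact: (Gauss_dvdr (msize_multiplicative n) (@has_prime_divisors_mpoly n) f0 fg).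
Qed.

End MpolyGauss.

Section MsizeBounds.
Variables (K : fieldType) (n : nat).
Implicit Types p q : {mpoly K[n]}.

Lemma msize_leq p k : (forall m, (k <= mdeg m)%N -> p@_m = 0) -> (msize p <= k)%N.
Proof.
move=> pk; rewrite leqNgt; apply/negP => kp.
have p0 : p != 0 by rewrite -msize_poly_eq0 -lt0n (leq_ltn_trans _ kp).
move: (pk (mlead p)); rewrite -ltnS mlead_deg // => /(_ kp) /eqP.
by rewrite mleadc_eq0 (negbTE p0).
Qed.

Lemma msize_sum_leq (I : Type) (r : seq I) (P : pred I) (F : I -> {mpoly K[n]}) k :
  (forall i, P i -> (msize (F i) <= k)%N) -> (msize (\sum_(i <- r | P i) F i) <= k)%N.
Proof.
move=> Fk; apply: (big_ind (fun p => msize p <= k)%N) => //; first by rewrite msize0.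
by move=> p q pk qk; apply: leq_trans (msizeD_le _ _) _; rewrite geq_max pk qk.
Qed.

Lemma msizeM_leq p q : (msize (p * q) <= (msize p + msize q).-1)%N.
Proof.
have [->|p0] := eqVneq p 0; first by rewrite mul0r msize0.
have [->|q0] := eqVneq q 0; first by rewrite mulr0 msize0.
by rewrite msizeM.
Qed.

End MsizeBounds.

Section CompositionTopDegree.
Variables (K : fieldType) (n : nat) (der : 'I_n -> K -> K).
Hypothesis derD : forall i a b, der i (a + b) = der i a + der i b.
Implicit Types A B M N : {mpoly K[n]}.

Lemma der0 i : der i 0 = 0.
Proof. by apply: (addrI (der i 0)); rewrite -derD !addr0. Qed.

Lemma derB i a b : der i (a - b) = der i a - der i b.
Proof. by apply: (addIr (der i b)); rewrite -derD !subrK. Qed.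

Lemma Di_compB i M N : Di_comp der i (M - N) = Di_comp der i M - Di_comp der i N.
Proof.
apply/mpolyP => m; rewrite /Di_comp !(mcoeffB, mcoeffD) !(mcoeff_sum_msupp (F := fun _ => der i)) ?der0 //.
by rewrite mcoeffB derB mulrBr mcoeffB; ring.
Qed.

Lemma DJ_compB J M N : DJ_comp der J (M - N) = DJ_comp der J M - DJ_comp der J N.
Proof.
rewrite /DJ_comp; elim: (enum 'I_n) => //= i s ->.
by elim: (J i) => //= k ->; rewrite Di_compB.
Qed.

Lemma dcompBr A M N : dcomp der A (M - N) = dcomp der A M - dcomp der A N.
Proof. by rewrite /dcomp -sumrB; apply: eq_bigr => m _; rewrite DJ_compB scalerBr. Qed.

Lemma dcomp_bigE A M k : (msize A <= k)%N ->
  dcomp der A M = \sum_(m : 'X_{1..n < k}) A@_m *: DJ_comp der m M.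
Proof.
move=> Ak; rewrite /dcomp (ssrcomplements.big_mksub 'X_{1..n < k}) //=; first last.
- by move=> m /msize_mdeg_lt /leq_trans /(_ Ak) ->.
- by rewrite msupp_uniq.
by rewrite big_rmcond //= => m /memN_msupp_eq0 ->; rewrite scale0r.
Qed.

Lemma dcompBl A B M : dcomp der (A - B) M = dcomp der A M - dcomp der B M.
Proof.
pose k := maxn (msize A) (msize B).
have A_k : (msize A <= k)%N by rewrite leq_maxl.
have B_k : (msize B <= k)%N by rewrite leq_maxr.
have AB_k : (msize (A - B) <= k)%N.
  by apply: leq_trans (msizeD_le _ _) _; rewrite msizeN geq_max A_k B_k.
rewrite !(@dcomp_bigE _ _ k) // -sumrB; apply: eq_bigr => m _.
by rewrite mcoeffB scalerBl.
Qed.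

Lemma dcomp0l M : dcomp der 0 M = 0.
Proof. by move: (dcompBl 0 0 M); rewrite !subrr. Qed.

Lemma dcomp0r A : dcomp der A 0 = 0.
Proof. by move: (dcompBr A 0 0); rewrite !subrr. Qed.

(* D_i o (X^m N + lower) = X^(m + e_i) N + lower: the correction terms
   der_i(coefficients) do not raise the size. *)
Lemma msize_Di_comp_sub i (m : 'X_{1..n}) M N :
  (msize (M - 'X_[m] * N) <= (mdeg m + msize N).-1)%N ->
  (msize (Di_comp der i M - 'X_[m + U_(i)] * N) <= (mdeg (m + U_(i)) + msize N).-1)%N.
Proof.
set E := M - 'X_[m] * N => E_le.
have eM : M = E + 'X_[m] * N by rewrite /E subrK.
have -> : Di_comp der i M - 'X_[m + U_(i)] * N =
    'X_i * E + \sum_(m' <- msupp M) der i M@_m' *: 'X_[m'].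
  by rewrite /Di_comp mpolyXD {1}eM /E; ring.
have der_le : (msize (\sum_(m' <- msupp M) der i M@_m' *: 'X_[m']) <= msize M)%N.
  apply: msize_leq => m' /msize_mdeg_ge/memN_msupp_eq0 M0.
  by rewrite (mcoeff_sum_msupp (F := fun _ => der i)) ?der0 // M0 der0.
rewrite mdegD mdeg1; apply: leq_trans (msizeD_le _ _) _; rewrite geq_max.
apply/andP; split.
  have [->|E0] := eqVneq E 0; first by rewrite mulr0 msize0.
  apply: leq_trans (msizeM_leq _ _) _; rewrite msizeX mdeg1.
  have : (0 < msize E)%N by rewrite lt0n msize_poly_eq0.
  by move: E_le; lia.
apply: leq_trans der_le _; rewrite eM; apply: leq_trans (msizeD_le _ _) _.
rewrite geq_max; apply/andP; split; first by move: E_le; lia.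
by apply: leq_trans (msizeM_leq _ _) _; rewrite msizeX addn1.
Qed.

Lemma msize_DJ_comp_sub J N :
  (msize (DJ_comp der J N - 'X_[J] * N) <= (mdeg J + msize N).-1)%N.
Proof.
have sumJ : (\sum_(i <- enum 'I_n) U_(i) *+ J i)%MM = J.
  by rewrite [RHS]multinomUE_id big_enum /=; apply: eq_bigl => i; rewrite inE.
rewrite /DJ_comp -[X in 'X_[X]]sumJ -[X in mdeg X]sumJ; elim: (enum 'I_n) => [|i s IH] /=.
  by rewrite big_nil mpolyX0 mul1r subrr msize0.
rewrite big_cons addmC; elim: (J i) => [|k IHk] /=; first by rewrite mulm0n addm0.
by rewrite mulmSr addmA; apply: msize_Di_comp_sub.
Qed.

Lemma msize_dcomp_subM A B : (msize (dcomp der A B - A * B) <= (msize (A * B)).-1)%N.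
Proof.
have [->|A0] := eqVneq A 0; first by rewrite dcomp0l mul0r subrr msize0.
have [->|B0] := eqVneq B 0; first by rewrite dcomp0r mulr0 subrr msize0.
have -> : dcomp der A B - A * B =
    \sum_(m <- msupp A) A@_m *: (DJ_comp der m B - 'X_[m] * B).
  rewrite {2}[A]mpolyE mulr_suml /dcomp -sumrB.
  by apply: eq_bigr => m _; rewrite scalerBr scalerAl.
rewrite big_seq; apply: msize_sum_leq => m /msize_mdeg_lt mA.
apply: leq_trans (msizeZ_le _ _) _; apply: leq_trans (msize_DJ_comp_sub _ _) _.
have B_gt0 : (0 < msize B)%N by rewrite lt0n msize_poly_eq0.
rewrite msizeM //; move: mA B_gt0; move: (mdeg m) (msize A) (msize B); lia.
Qed.

Lemma msize_dcomp_sum_leq A B C D t :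
  msize (A * B + C * D) = maxn (msize (A * B)) (msize (C * D)) ->
  (msize (dcomp der A B + dcomp der C D) <= t)%N ->
  (maxn (msize (A * B)) (msize (C * D)) <= t)%N.
Proof.
set M := maxn _ _ => eM le_t; rewrite leqNgt; apply/negP => lt_tM.
have M_gt0 : (0 < M)%N by apply: leq_ltn_trans lt_tM.
have le_tM1 : (t <= M.-1)%N by rewrite -ltnS prednK.
have : (msize (A * B + C * D) <= M.-1)%N.
  rewrite (_ : A * B + C * D = (dcomp der A B + dcomp der C D) -
      ((dcomp der A B - A * B) + (dcomp der C D - C * D))); last by ring.
  apply: leq_trans (msizeD_le _ _) _; rewrite msizeN geq_max (leq_trans le_t) //=.
  apply: leq_trans (msizeD_le _ _) _; rewrite geq_max.
  by rewrite !(leq_trans (msize_dcomp_subM _ _)) // -!subn1 leq_sub2r ?leq_maxl ?leq_maxr.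
by rewrite eM -ltnS prednK ?ltnn.
Qed.

End CompositionTopDegree.

Section Symbol.
Variables (K : fieldType) (n : nat).
Implicit Types P Q : {mpoly K[n]}.

Lemma SymE P : Sym P = pihomog mdeg (msize P).-1 P.
Proof. by []. Qed.

Lemma mcoeff_pihomog d P m :
  (pihomog mdeg d P)@_m = if mdeg m == d then P@_m else 0.
Proof.
rewrite pihomogE big_mkcond /= -(mcoeff_sum_msupp (F := fun m x => if mdeg m == d then x else 0)).
  by congr mcoeff; apply: eq_bigr => m' _; case: ifP; rewrite ?scale0r.
by case: ifP.
Qed.

Lemma pihomog_msize_leq d P : (msize P <= d)%N -> pihomog mdeg d P = 0.
Proof.
move=> Pd; apply/mpolyP => m; rewrite mcoeff_pihomog mcoeff0.
by case: eqP => // md; apply/memN_msupp_eq0/msize_mdeg_ge; rewrite md.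
Qed.

Lemma msize_sub_Sym P : (msize (P - Sym P) <= (msize P).-1)%N.
Proof.
apply: msize_leq => m le_m; rewrite mcoeffB SymE mcoeff_pihomog.
case: eqP => [_|ne]; first by rewrite subrr.
rewrite subr0; apply/memN_msupp_eq0/msize_mdeg_ge.
by move: le_m ne; case: (msize P) => //= s; rewrite leq_eqVlt => /predU1P [->|].
Qed.

Lemma Sym_eq0 P : (Sym P == 0) = (P == 0).
Proof.
apply/eqP/eqP => [SP0|->]; last by rewrite SymE pihomog0.
apply/eqP; apply: contraT => P0.
move/(congr1 (mcoeff (mlead P))): SP0; rewrite SymE mcoeff_pihomog mcoeff0.
by rewrite -(mlead_deg P0) eqxx => /eqP; rewrite mleadc_eq0 (negbTE P0).
Qed.

Lemma msize_Sym P : msize (Sym P) = msize P.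
Proof.
apply/eqP; rewrite eqn_leq; apply/andP; split.
  apply: msize_leq => m le_m; rewrite SymE mcoeff_pihomog.
  by case: eqP => // _; apply/memN_msupp_eq0/msize_mdeg_ge.
have [->|P0] := eqVneq P 0; first by rewrite msize0.
rewrite -(mlead_deg P0); apply: msize_mdeg_lt.
by rewrite mcoeff_msupp SymE mcoeff_pihomog -(mlead_deg P0) eqxx mleadc_eq0.
Qed.

Lemma SymM P Q : P != 0 -> Q != 0 -> Sym (P * Q) = Sym P * Sym Q.
Proof.
move=> P0 Q0; have [P_gt0 Q_gt0] : (0 < msize P)%N /\ (0 < msize Q)%N.
  by rewrite !lt0n !msize_poly_eq0.
rewrite SymE msizeM // (_ : P * Q = Sym P * Sym Q +
  ((P - Sym P) * Q + Sym P * (Q - Sym Q))); last by ring.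
rewrite pihomogD pihomog_dE; last first.
  have -> : (msize P + msize Q).-2 = ((msize P).-1 + (msize Q).-1)%N.
    by move: P_gt0 Q_gt0; lia.
  exact: dhomogM (pihomogP _ _ _) (pihomogP _ _ _).
rewrite pihomog_msize_leq ?addr0 //.
apply: leq_trans (msizeD_le _ _) _; rewrite geq_max; apply/andP; split.
  apply: leq_trans (msizeM_leq _ _) _; move: (msize_sub_Sym P).
  by move: P_gt0 Q_gt0; move: (msize (P - Sym P)) (msize P) (msize Q); lia.
apply: leq_trans (msizeM_leq _ _) _; rewrite msize_Sym; move: (msize_sub_Sym Q).
by move: P_gt0 Q_gt0; move: (msize (Q - Sym Q)) (msize P) (msize Q); lia.
Qed.

Lemma msize_sub_eq_Sym P Q : Sym P = Sym Q -> (msize (P - Q) <= (msize P).-1)%N.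
Proof.
move=> PQ; have eP : msize P = msize Q by rewrite -msize_Sym PQ msize_Sym.
rewrite (_ : P - Q = (P - Sym P) - (Q - Sym Q)); last by rewrite PQ; ring.
apply: leq_trans (msizeD_le _ _) _; rewrite msizeN geq_max msize_sub_Sym.
by rewrite eP msize_sub_Sym.
Qed.

Lemma pihomog_predM P Q k : (0 < k)%N -> (msize (P * Q) <= k)%N ->
  pihomog mdeg k.-1 (P * Q) = if msize (P * Q) == k then Sym P * Sym Q else 0.
Proof.
move=> k_gt0; rewrite leq_eqVlt => /predU1P [PQk|lt_k]; last first.
  by rewrite ltn_eqF // pihomog_msize_leq // -ltnS prednK.
have [P0|P0] := eqVneq P 0; first by move: PQk; rewrite P0 mul0r msize0 => k0; rewrite -k0 in k_gt0.
have [Q0|Q0] := eqVneq Q 0; first by move: PQk; rewrite Q0 mulr0 msize0 => k0; rewrite -k0 in k_gt0.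
by rewrite PQk eqxx -SymM // SymE PQk.
Qed.

Lemma dvdr_msize_leq P Q : dvdr P Q -> Q != 0 -> (msize P <= msize Q)%N.
Proof.
move=> [R eQ] Q0; have R0 : R != 0 by apply: contraNneq Q0 => R0; rewrite eQ R0 mulr0.
have P0 : P != 0 by apply: dvdr_neq0 Q0; exists R.
by rewrite eQ msizeM // -subn1 -addnBA ?leq_addr // lt0n msize_poly_eq0.
Qed.

(* The symbols S1 = Sym F1 and S2 = Sym F2 being coprime, S1 Sym G2 + Sym G1 S2
   = 0 would force S1 | Sym G1, impossible since G1 is smaller than F1. *)
Lemma msize_cross_sum (F1 F2 G1 G2 : {mpoly K[n]}) : F1 != 0 -> F2 != 0 ->
  mcoprime (Sym F1) (Sym F2) -> (msize G1 < msize F1)%N ->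
  msize (F1 * G2 + G1 * F2) = maxn (msize (F1 * G2)) (msize (G1 * F2)).
Proof.
move=> F10 F20 cop lt_G1F1; have S10 : Sym F1 != 0 by rewrite Sym_eq0.
have S20 : Sym F2 != 0 by rewrite Sym_eq0.
set M := maxn _ _; apply/eqP; rewrite eqn_leq msizeD_le /=.
have [M0|M_gt0] := posnP M; first by rewrite M0.
have top_nz : pihomog mdeg M.-1 (F1 * G2 + G1 * F2) != 0.
  rewrite pihomogD !pihomog_predM ?leq_maxl ?leq_maxr //.
  have nz_of (a : {mpoly K[n]}) : msize a = M -> a != 0.
    by move=> aM; rewrite -msize_poly_eq0 aM -lt0n.
  case: (msize (F1 * G2) =P M) => [aM|aM]; case: (msize (G1 * F2) =P M) => [bM|bM].
  - apply/negP; rewrite addr_eq0 -mulNr => /eqP eS.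
    have /(mpoly_Gauss_dvdr S10 cop) : dvdr (Sym F1) (- Sym G1 * Sym F2).
      by exists (Sym G2).
    have G10 : G1 != 0 by apply: contraNneq (nz_of _ bM) => ->; rewrite mul0r.
    move/dvdr_msize_leq; rewrite oppr_eq0 Sym_eq0 => /(_ G10).
    by rewrite msizeN !msize_Sym leqNgt lt_G1F1.
  - rewrite addr0 mulf_neq0 // Sym_eq0.
    by apply: contraNneq (nz_of _ aM) => ->; rewrite mulr0.
  - rewrite add0r mulf_neq0 // Sym_eq0.
    by apply: contraNneq (nz_of _ bM) => ->; rewrite mul0r.
  - by case: (leqP (msize (F1 * G2)) (msize (G1 * F2))) => [/maxn_idPr|/ltnW/maxn_idPl] eM;
      [case: bM | case: aM]; rewrite /M eM.
rewrite -(prednK M_gt0); apply: contraR top_nz; rewrite -leqNgt => le_M1.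
by rewrite pihomog_msize_leq.
Qed.

Lemma ord_ltP P (t : nat) : ord_lt P t%:Z = (msize P <= t)%N.
Proof.
rewrite /ord_lt /dord; case: eqP => [->|/eqP P0]; first by rewrite msize0.
by rewrite ltz_nat [msize P](mpolySpred _ P0).
Qed.

Lemma ord_lt_msizeM P Q (t : nat) : Q != 0 -> (msize (P * Q) <= t)%N ->
  ord_lt P (t%:Z - (msize Q).-1%:Z).
Proof.
have [->|P0] := eqVneq P 0; first by rewrite /ord_lt /dord eqxx.
move=> Q0; rewrite /ord_lt /dord (negbTE P0) msizeM //.
have : (0 < msize P)%N by rewrite lt0n msize_poly_eq0.
have : (0 < msize Q)%N by rewrite lt0n msize_poly_eq0.
by move: (msize P) (msize Q) => p q; lia.
Qed.

End Symbol.

Theorem mainTheorem4 (K : fieldType) (n : nat) (der : 'I_n -> K -> K)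
  (Hder : commuting_derivations der)
  (L S1 S2 : {mpoly K[n]})
  (HS1 : S1 \is homog mdeg) (HS2 : S2 \is homog mdeg)
  (Hcop : mcoprime S1 S2)
  (HsymL : Sym L = S1 * S2)
  (t : nat) (Ht : (t < (msize L).-1)%N)
  (F1 F2 F1' F2' : {mpoly K[n]})
  (HF : partial_factorization der L t S1 S2 F1 F2)
  (HF' : partial_factorization der L t S1 S2 F1' F2') :
  ord_lt (F1 - F1') (t%:Z - ((msize L).-1%:Z - (pdeg S1)%:Z)) /\
  ord_lt (F2 - F2') (t%:Z - ((msize L).-1%:Z - (pdeg S2)%:Z)).
Proof.
have [derD _ _] := Hder.
case: HF HF' => SF1 SF2; rewrite ord_ltP => LF [SF1' SF2']; rewrite ord_ltP => LF'.
have L0 : L != 0 by rewrite -msize_poly_eq0; apply: contraTneq Ht => ->.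
have /andP [S10 S20] : (S1 != 0) && (S2 != 0).
  by rewrite -negb_or -mulf_eq0 -HsymL Sym_eq0.
have F10 : F1 != 0 by rewrite -Sym_eq0 SF1.
have F20' : F2' != 0 by rewrite -Sym_eq0 SF2'.
have lt_G1 : (msize (F1 - F1') < msize F1)%N.
  rewrite (leq_ltn_trans (msize_sub_eq_Sym (etrans SF1 (esym SF1')))) // prednK //.
  by rewrite lt0n msize_poly_eq0.
have dcomp_G : (msize (dcomp der F1 (F2 - F2') + dcomp der (F1 - F1') F2') <= t)%N.
  rewrite (dcompBr derD) (dcompBl der) (_ : _ + _ = (L - dcomp der F1' F2') - (L - dcomp der F1 F2)); last by ring.
  by apply: leq_trans (msizeD_le _ _) _; rewrite msizeN geq_max LF LF'.
have /(msize_dcomp_sum_leq derD) /(_ dcomp_G) : msize (F1 * (F2 - F2') + (F1 - F1') * F2') =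
    maxn (msize (F1 * (F2 - F2'))) (msize ((F1 - F1') * F2')).
  by apply: msize_cross_sum => //; rewrite SF1 SF2'.
rewrite geq_max => /andP [le_G2 le_G1].
have eL : (msize L).-1 = ((msize S1).-1 + (msize S2).-1)%N.
  have [S1_gt0 S2_gt0] : (0 < msize S1)%N /\ (0 < msize S2)%N by rewrite !lt0n !msize_poly_eq0.
  by rewrite -msize_Sym HsymL msizeM //; move: S1_gt0 S2_gt0; move: (msize S1) (msize S2); lia.
have -> : (msize L).-1%:Z - (pdeg S1)%:Z = (msize S2).-1%:Z.
  by rewrite /pdeg eL PoszD addrC addKr.
have -> : (msize L).-1%:Z - (pdeg S2)%:Z = (msize S1).-1%:Z.
  by rewrite /pdeg eL PoszD addrK.
rewrite -SF1 -SF2' !msize_Sym.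
by split; apply: ord_lt_msizeM; rewrite // mulrC.
Qed.
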